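(* The system with axioms L1 $=i(i(x,y),i(i(y,z),i(x,z)))$, L2 $=i(i(n(x),x),x)$, L3 $=i(x,i(n(x),y))$ and condensed detachment as sole rule of inference admits strong double-negation elimination.
   Context: Formulas are terms built from propositional variables using the binary connective $i$ (implication) and the unary connective $n$ (negation). Condensed detachment: from a major premiss $i(A,B)$ and a minor premiss $C$, after renaming variables so that the two premisses share no variables, if $A$ and $C$ are unifiable with most general unifier $\sigma$, infer $B\sigma$. Alphabetic variants of axioms count as axioms, and conclusions may be renamed. A proof is a finite sequence of formulas each an axiom or obtained from earlier lines by the rule; deduced steps are the non-axiom lines. Given a formula $B$, a formula $B^*$ is obtained from $B$ by selecting some set of doubly negated subformulas $n(n(q))$ of $B$ and replacing all occurrences of each selected subformula by $q$. A system admits strong double-negation elimination if whenever it proves $B$ and $B^*$ is obtained from $B$ in this way, there is a proof of $B^*$ in the system in which every subformula of the form $n(n(t))$ of a deduced step occurs (up to renaming of variables) as a subformula of $B^*$. *)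

From Stdlib Require Import List Arith.
Import ListNotations.

Inductive form : Type :=
| Var : nat -> form
| Imp : form -> form -> form
| Neg : form -> form.

Definition form_eq_dec (a b : form) : {a = b} + {a <> b}.
Proof. decide equality; apply Nat.eq_dec. Defined.

Fixpoint subst (s : nat -> form) (f : form) : form :=
  match f with
  | Var v => s v
  | Imp a b => Imp (subst s a) (subst s b)
  | Neg a => Neg (subst s a)
  end.

Fixpoint rename (r : nat -> nat) (f : form) : form :=
  match f with
  | Var v => Var (r v)
  | Imp a b => Imp (rename r a) (rename r b)
  | Neg a => Neg (rename r a)
  end.

Definition variant (A B : form) : Prop :=
  exists r : nat -> nat, (forall u v, r u = r v -> u = v) /\ rename r A = B.

Fixpoint occurs (v : nat) (f : form) : Prop :=
  match f with
  | Var w => v = w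
  | Imp a b => occurs v a \/ occurs v b
  | Neg a => occurs v a
  end.

Fixpoint sub (t f : form) : Prop :=
  t = f \/
  match f with
  | Var _ => False
  | Imp a b => sub t a \/ sub t b
  | Neg a => sub t a
  end.

Definition unifier (s : nat -> form) (A C : form) : Prop := subst s A = subst s C.

Definition mgu (s : nat -> form) (A C : form) : Prop :=
  unifier s A C /\
  forall t, unifier t A C -> exists l : nat -> form, forall v, t v = subst l (s v).

Definition cd (P Q D : form) : Prop :=
  exists A B Q' (s : nat -> form),
    variant P (Imp A B) /\ variant Q Q' /\
    (forall v, occurs v (Imp A B) -> ~ occurs v Q') /\
    mgu s A Q' /\ variant (subst s B) D.

Inductive just : Type :=
| JAx : just
| JCD : nat -> nat -> just.

Definition line := (form * just)%type.

Definition valid_line (axioms : list form) (pf : list line) (k : nat) : Prop :=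
  match nth k pf (Var 0, JAx) with
  | (f, JAx) => exists a, In a axioms /\ variant a f
  | (f, JCD i j) =>
      i < k /\ j < k /\
      cd (fst (nth i pf (Var 0, JAx))) (fst (nth j pf (Var 0, JAx))) f
  end.

Definition is_proof (axioms : list form) (pf : list line) (B : form) : Prop :=
  pf <> [] /\
  (forall k, k < length pf -> valid_line axioms pf k) /\
  fst (last pf (Var 0, JAx)) = B.

Definition provable (axioms : list form) (B : form) : Prop :=
  exists pf, is_proof axioms pf B.

Definition deduced_step (pf : list line) (D : form) : Prop :=
  exists i j, In (D, JCD i j) pf.

(* B* : every (original) occurrence of a selected subformula n(n(q)) is
   replaced by q (recursively inside q as well, so every occurrence of
   every selected subformula gets replaced) *)
Fixpoint star (S : list form) (f : form) : form :=
  match f with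
  | Var v => Var v
  | Imp a b => Imp (star S a) (star S b)
  | Neg a =>
      match a with
      | Neg q => if in_dec form_eq_dec f S then star S q
                 else Neg (star S a)
      | _ => Neg (star S a)
      end
  end.

Definition dn_selection (S : list form) (B : form) : Prop :=
  forall t, In t S -> sub t B /\ exists q, t = Neg (Neg q).

Definition strong_dn_elim (axioms : list form) : Prop :=
  forall B S, provable axioms B -> dn_selection S B ->
    exists pf, is_proof axioms pf (star S B) /\
      forall D, deduced_step pf D ->
        forall q, sub (Neg (Neg q)) D ->
          exists u, sub u (star S B) /\ variant (Neg (Neg q)) u.

Definition x := Var 0.
Definition y := Var 1.
Definition z := Var 2.
Definition L1 := Imp (Imp x y) (Imp (Imp y z) (Imp x z)).
Definition L2 := Imp (Imp (Neg x) x) x.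
Definition L3 := Imp x (Imp (Neg x) y).

(* Every formula provable from L1-L3 by condensed detachment is a tautology, and
   B* has the truth table of B, so B* is a tautology T.  It therefore suffices to
   derive every tautology T so that each double negation in a deduced step is a
   subformula of T.  This is Kalmár's completeness proof carried out with
   condensed detachment: a fixed stock of schemas without double negations, each
   obtained by an explicit chain of detachments, is instantiated only with
   subformulas of T and their negations, where the negation of [Neg D] is taken
   to be [D].  As detachment yields only most general conclusions, every
   intermediate theorem carries the antecedent (p1 -> ... -> pn) -> (p1 -> ... -> pn)
   over the variables of T, which pins those variables down; it is discharged at
   the end by detachment against p -> p. *)

From Stdlib Require Import List Arith Lia Bool.
Import ListNotations.

Infix "-->" := Imp (at level 55, right associativity).

Fixpoint vars (f : form) : list nat :=
  match f with
  | Var v => [v]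
  | Imp a b => vars a ++ vars b
  | Neg a => vars a
  end.

Lemma occurs_vars (v : nat) (f : form) : occurs v f <-> In v (vars f).
Proof.
  induction f; simpl.
  - split; [intros ->; auto | intros [->|[]]; auto].
  - rewrite in_app_iff. tauto.
  - tauto.
Qed.

Definition occurs_dec (v : nat) (f : form) : {occurs v f} + {~ occurs v f}.
Proof.
  destruct (in_dec Nat.eq_dec v (vars f)); [left | right]; rewrite occurs_vars; assumption.
Defined.

Fixpoint maxvar (f : form) : nat :=
  match f with
  | Var v => v
  | Imp a b => Nat.max (maxvar a) (maxvar b)
  | Neg a => maxvar a
  end.

Lemma occurs_maxvar (v : nat) (f : form) : occurs v f -> v <= maxvar f.
Proof.
  induction f; simpl; intros H; try lia.
  - destruct H as [H|H]; [apply IHf1 in H | apply IHf2 in H]; lia.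
  - auto.
Qed.

Lemma subst_ext (s1 s2 : nat -> form) (f : form) :
  (forall v, occurs v f -> s1 v = s2 v) -> subst s1 f = subst s2 f.
Proof. induction f; simpl; intros H; f_equal; auto. Qed.

Lemma subst_ext_inv (s1 s2 : nat -> form) (f : form) :
  subst s1 f = subst s2 f -> forall v, occurs v f -> s1 v = s2 v.
Proof.
  induction f; simpl; intros H v Hv.
  - subst; auto.
  - injection H; intros; destruct Hv; eauto.
  - injection H; intros; eauto.
Qed.

Lemma subst_var (f : form) : subst Var f = f.
Proof. induction f; simpl; congruence. Qed.

Lemma subst_id_on (s : nat -> form) (f : form) :
  (forall v, occurs v f -> s v = Var v) -> subst s f = f.
Proof. intros H. rewrite <- (subst_var f) at 2. apply subst_ext, H. Qed.

Lemma subst_subst (t s : nat -> form) (f : form) :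
  subst t (subst s f) = subst (fun v => subst t (s v)) f.
Proof. induction f; simpl; congruence. Qed.

Lemma rename_subst (r : nat -> nat) (f : form) : rename r f = subst (fun v => Var (r v)) f.
Proof. induction f; simpl; congruence. Qed.

Lemma rename_rename (r1 r2 : nat -> nat) (f : form) :
  rename r2 (rename r1 f) = rename (fun v => r2 (r1 v)) f.
Proof. induction f; simpl; congruence. Qed.

Lemma rename_ext (r1 r2 : nat -> nat) (f : form) :
  (forall v, occurs v f -> r1 v = r2 v) -> rename r1 f = rename r2 f.
Proof. intros H. rewrite !rename_subst. apply subst_ext. intros; f_equal; auto. Qed.

Lemma rename_id (f : form) : rename (fun v => v) f = f.
Proof. induction f; simpl; congruence. Qed.

Lemma occurs_subst (s : nat -> form) (v : nat) (f : form) :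
  occurs v (subst s f) <-> exists w, occurs w f /\ occurs v (s w).
Proof.
  induction f; simpl.
  - split; [eauto | intros [w [-> H]]; exact H].
  - rewrite IHf1, IHf2. firstorder.
  - exact IHf.
Qed.

Lemma occurs_rename (r : nat -> nat) (v : nat) (f : form) :
  occurs v (rename r f) <-> exists w, occurs w f /\ v = r w.
Proof. rewrite rename_subst, occurs_subst. reflexivity. Qed.

Lemma variant_refl (f : form) : variant f f.
Proof. exists (fun v => v). split; auto using rename_id. Qed.

Lemma variant_trans (a b c : form) : variant a b -> variant b c -> variant a c.
Proof.
  intros [r1 [I1 <-]] [r2 [I2 <-]]. exists (fun v => r2 (r1 v)).
  split; [auto | symmetry; apply rename_rename].
Qed.

Fixpoint maxl (l : list nat) : nat :=
  match l with [] => 0 | v :: l => Nat.max v (maxl l) end.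

Lemma maxl_in (v : nat) (l : list nat) : In v l -> v <= maxl l.
Proof. induction l as [|u l IH]; simpl; [tauto|]. intros [->|H]; [|apply IH in H]; lia. Qed.

(* A renaming that is injective on the variables of [f] extends to a globally
   injective one by sending the other variables above its range. *)
Lemma variant_rename (r : nat -> nat) (f : form) :
  (forall u w, occurs u f -> occurs w f -> r u = r w -> u = w) -> variant f (rename r f).
Proof.
  intros Hinj.
  set (M := S (maxl (map r (vars f)))).
  assert (HM : forall u, In u (vars f) -> r u < M)
    by (intros u Hu; apply (in_map r), maxl_in in Hu; unfold M; lia).
  exists (fun u => if in_dec Nat.eq_dec u (vars f) then r u else u + M). split.
  - intros u w.
    destruct (in_dec Nat.eq_dec u (vars f)) as [Hu|Hu];
      destruct (in_dec Nat.eq_dec w (vars f)) as [Hw|Hw]; intros H.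
    + apply Hinj; auto; apply occurs_vars; auto.
    + specialize (HM u Hu). lia.
    + specialize (HM w Hw). lia.
    + lia.
  - apply rename_ext. intros v Hv. apply occurs_vars in Hv.
    destruct (in_dec Nat.eq_dec v (vars f)); tauto.
Qed.

Lemma variant_sym (a b : form) : variant a b -> variant b a.
Proof.
  intros [r [Hinj <-]].
  set (g := fun w => match find (fun v => Nat.eqb (r v) w) (vars a) with
                     | Some v => v | None => w end).
  assert (Hg : forall v, occurs v a -> g (r v) = v).
  { intros v Hv. unfold g. apply occurs_vars in Hv.
    destruct (find (fun u => Nat.eqb (r u) (r v)) (vars a)) eqn:E.
    - apply find_some in E. destruct E as [_ E]. apply Nat.eqb_eq in E. auto.
    - eapply find_none in E; [|exact Hv]. rewrite Nat.eqb_refl in E. discriminate. }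
  assert (Hback : rename g (rename r a) = a).
  { rewrite rename_rename. rewrite <- (rename_id a) at 2. apply rename_ext. auto. }
  rewrite <- Hback at 2. apply variant_rename.
  intros u w Hu Hw H.
  apply occurs_rename in Hu as [u' [Hu' ->]]. apply occurs_rename in Hw as [w' [Hw' ->]].
  rewrite !Hg in H by assumption. congruence.
Qed.

Lemma mgu_sym (s : nat -> form) (A C : form) : mgu s A C -> mgu s C A.
Proof.
  unfold mgu, unifier. intros [H1 H2]. split; [auto|]. intros t Ht. apply H2. auto.
Qed.

Lemma mgu_of_matcher (s : nat -> form) (X Y : form) :
  (forall v, ~ occurs v X -> s v = Var v) ->
  (forall v, occurs v Y -> ~ occurs v X) ->
  subst s X = Y -> mgu s X Y.
Proof.
  intros Hout Hdisj HXY. split.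
  - unfold unifier. rewrite HXY. symmetry. apply subst_id_on. auto.
  - intros t Ht. exists t. intros v.
    destruct (occurs_dec v X) as [Hv|Hv]; [|rewrite Hout; auto].
    unfold unifier in Ht. rewrite <- HXY, subst_subst in Ht.
    exact (subst_ext_inv _ _ _ Ht v Hv).
Qed.

Lemma cd_of_shifted_minor (A B Q D : form) (s : nat -> form) (N : nat) :
  (forall v, occurs v (A --> B) -> v < N) ->
  mgu s A (rename (fun v => v + N) Q) -> variant (subst s B) D -> cd (A --> B) Q D.
Proof.
  intros HAB Hmgu HD. exists A, B, (rename (fun v => v + N) Q), s.
  split; [apply variant_refl|]. split.
  { exists (fun v => v + N). split; [intros u v; lia | reflexivity]. }
  split; [|tauto].
  intros v Hv HvQ. apply occurs_rename in HvQ as [w [_ ->]]. apply HAB in Hv. lia.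
Qed.

Lemma cd_minor_instance (A B Q : form) (sg : nat -> form) :
  subst sg A = Q ->
  (forall v, occurs v B -> ~ occurs v A -> ~ occurs v Q /\ sg v = Var v) ->
  cd (A --> B) Q (subst sg B).
Proof.
  intros HA HB.
  set (N := S (Nat.max (maxvar (A --> B)) (maxvar Q))).
  assert (HAB : forall v, occurs v (A --> B) -> v < N)
    by (intros v Hv; apply occurs_maxvar in Hv; unfold N; lia).
  assert (HQ : forall v, occurs v Q -> v < N)
    by (intros v Hv; apply occurs_maxvar in Hv; unfold N; lia).
  set (s' := fun v => if occurs_dec v A then rename (fun w => w + N) (sg v) else Var v).
  apply (cd_of_shifted_minor _ _ _ _ s' N HAB).
  { apply mgu_of_matcher.
    - intros v Hv. unfold s'. destruct (occurs_dec v A); tauto.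
    - intros v Hv HvA. apply occurs_rename in Hv as [w [_ ->]].
      assert (w + N < N) by (apply HAB; simpl; auto). lia.
    - rewrite <- HA, rename_subst, subst_subst. apply subst_ext.
      intros v Hv. unfold s'. destruct (occurs_dec v A); [|tauto]. apply rename_subst. }
  set (g := fun w => if occurs_dec w Q then w + N else w).
  assert (Hsmall : forall w, occurs w (subst sg B) -> w < N).
  { intros w Hw. apply occurs_subst in Hw as [v [HvB Hw]].
    destruct (occurs_dec v A) as [HvA|HvA].
    - apply HQ. rewrite <- HA. apply occurs_subst. eauto.
    - destruct (HB v HvB HvA) as [_ Hv]. rewrite Hv in Hw. simpl in Hw. subst w.
      apply HAB. simpl. auto. }
  assert (E : rename g (subst sg B) = subst s' B).
  { rewrite rename_subst, subst_subst. apply subst_ext. intros v Hv. unfold s'.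
    destruct (occurs_dec v A) as [HvA|HvA].
    - rewrite <- rename_subst, rename_subst, rename_subst. apply subst_ext.
      intros w Hw. unfold g. destruct (occurs_dec w Q) as [|HwQ]; [reflexivity|].
      exfalso. apply HwQ. rewrite <- HA. apply occurs_subst. eauto.
    - destruct (HB v Hv HvA) as [HvQ ->]. simpl. unfold g.
      destruct (occurs_dec v Q); [contradiction | reflexivity]. }
  apply variant_sym. rewrite <- E. apply variant_rename.
  intros u w Hu Hw. apply Hsmall in Hu. apply Hsmall in Hw. unfold g.
  destruct (occurs_dec u Q), (occurs_dec w Q); lia.
Qed.

Lemma cd_major_instance (A B Q : form) (sg : nat -> form) :
  subst sg Q = A -> cd (A --> B) Q B.
Proof.
  intros HA.
  set (N := S (Nat.max (maxvar (A --> B)) (maxvar Q))).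
  assert (HAB : forall v, occurs v (A --> B) -> v < N)
    by (intros v Hv; apply occurs_maxvar in Hv; unfold N; lia).
  set (Q' := rename (fun v => v + N) Q).
  assert (HQ' : forall v, occurs v Q' -> N <= v)
    by (intros v Hv; apply occurs_rename in Hv as [w [_ ->]]; lia).
  set (s' := fun v => if occurs_dec v Q' then sg (v - N) else Var v).
  apply (cd_of_shifted_minor _ _ _ _ s' N HAB).
  { apply mgu_sym, mgu_of_matcher.
    - intros v Hv. unfold s'. destruct (occurs_dec v Q'); tauto.
    - intros v Hv HvQ. apply HQ' in HvQ. assert (v < N) by (apply HAB; simpl; auto). lia.
    - rewrite <- HA. unfold Q'. rewrite rename_subst, subst_subst. apply subst_ext.
      intros v Hv. simpl. unfold s'. destruct (occurs_dec (v + N) Q') as [_|Hn].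
      + f_equal. lia.
      + exfalso. apply Hn. unfold Q'. apply occurs_rename. eauto. }
  rewrite subst_id_on; [apply variant_refl|]. intros v Hv. unfold s'.
  destruct (occurs_dec v Q') as [H|H]; [|reflexivity].
  apply HQ' in H. assert (v < N) by (apply HAB; simpl; auto). lia.
Qed.

(** * Derivations with a side condition on the deduced steps *)

Inductive derives (axs : list form) (G : form -> Prop) : form -> Prop :=
| derives_axiom a f : In a axs -> variant a f -> derives axs G f
| derives_cd P Q D : derives axs G P -> derives axs G Q -> cd P Q D -> G D -> derives axs G D.

Lemma derives_mono (axs : list form) (G1 G2 : form -> Prop) (F : form) :
  (forall f, G1 f -> G2 f) -> derives axs G1 F -> derives axs G2 F.
Proof.
  intros Hm H. induction H; [eapply derives_axiom | apply (derives_cd _ _ P Q)]; eauto.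
Qed.

Lemma derives_variant (axs : list form) (G : form -> Prop) (F F' : form) :
  derives axs G F -> variant F F' -> G F' -> derives axs G F'.
Proof.
  intros H Hv HG. destruct H as [a f Ha Hf | P Q D HP HQ [A [B [Q' [s Hcd]]]] _].
  - eapply derives_axiom; eauto using variant_trans.
  - apply (derives_cd _ _ P Q); auto. exists A, B, Q', s. intuition eauto using variant_trans.
Qed.

Lemma derives_minor_instance (axs : list form) (G : form -> Prop) (A B Q : form)
    (sg : nat -> form) :
  derives axs G (A --> B) -> derives axs G Q -> subst sg A = Q ->
  (forall v, occurs v B -> ~ occurs v A -> ~ occurs v Q /\ sg v = Var v) ->
  G (subst sg B) -> derives axs G (subst sg B).
Proof. intros. apply (derives_cd _ _ (A --> B) Q); auto using cd_minor_instance. Qed.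

Lemma derives_major_instance (axs : list form) (G : form -> Prop) (A B Q : form)
    (sg : nat -> form) :
  derives axs G (A --> B) -> derives axs G Q -> subst sg Q = A -> G B -> derives axs G B.
Proof. intros. apply (derives_cd _ _ (A --> B) Q); eauto using cd_major_instance. Qed.

Definition shift_line (n : nat) (l : line) : line :=
  match l with
  | (f, JAx) => (f, JAx)
  | (f, JCD i j) => (f, JCD (i + n) (j + n))
  end.

Lemma last_nth (pf : list line) (d : line) : last pf d = nth (length pf - 1) pf d.
Proof.
  induction pf as [|a [|b pf] IH]; auto.
  change (last (a :: b :: pf) d) with (last (b :: pf) d). rewrite IH.
  simpl. rewrite Nat.sub_0_r. reflexivity.
Qed.

Lemma valid_line_app_l (axs : list form) (pf rest : list line) (k : nat) :
  k < length pf -> valid_line axs pf k -> valid_line axs (pf ++ rest) k.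
Proof.
  unfold valid_line. intros Hk. rewrite app_nth1 by assumption.
  destruct (nth k pf (Var 0, JAx)) as [f [|i j]]; auto.
  intros [Hi [Hj Hc]]. rewrite !app_nth1 by lia. auto.
Qed.

Lemma nth_shifted (pP pQ rest : list line) (k : nat) : k < length pQ ->
  nth (length pP + k) (pP ++ map (shift_line (length pP)) pQ ++ rest) (Var 0, JAx)
  = shift_line (length pP) (nth k pQ (Var 0, JAx)).
Proof.
  intros Hk. rewrite app_nth2, app_nth1 by (rewrite ?length_map; lia).
  replace (length pP + k - length pP) with k by lia.
  rewrite nth_indep with (d' := shift_line (length pP) (Var 0, JAx)) by (rewrite length_map; lia).
  apply map_nth.
Qed.

Lemma valid_line_shifted (axs : list form) (pP pQ rest : list line) (k : nat) :
  k < length pQ -> valid_line axs pQ k ->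
  valid_line axs (pP ++ map (shift_line (length pP)) pQ ++ rest) (length pP + k).
Proof.
  unfold valid_line. intros Hk. rewrite nth_shifted by assumption.
  destruct (nth k pQ (Var 0, JAx)) as [f [|i j]] eqn:E; simpl; auto.
  intros [Hi [Hj Hc]]. split; [lia|]. split; [lia|].
  rewrite (Nat.add_comm i), (Nat.add_comm j), !nth_shifted by lia.
  destruct (nth i pQ _) as [? []], (nth j pQ _) as [? []]; exact Hc.
Qed.

Lemma proof_of_derives (axs : list form) (G : form -> Prop) (F : form) :
  derives axs G F -> exists pf, is_proof axs pf F /\ forall D, deduced_step pf D -> G D.
Proof.
  intros H.
  induction H as [a f Ha Hv
                 | P Q D _ [pP [[nP [vP lP]] dP]] _ [pQ [[nQ [vQ lQ]] dQ]] Hcd HG].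
  - exists [(f, JAx)]. split; [split; [discriminate | split; [|reflexivity]] |].
    + intros k Hk. simpl in Hk. replace k with 0 by lia. unfold valid_line. simpl. eauto.
    + intros D [i [j [E|[]]]]. discriminate.
  - assert (Hm : 0 < length pP) by (destruct pP; [congruence | simpl; lia]).
    assert (Hn : 0 < length pQ) by (destruct pQ; [congruence | simpl; lia]).
    rewrite last_nth in lP, lQ.
    set (m := length pP) in *. set (n := length pQ) in *.
    set (pf := pP ++ map (shift_line m) pQ ++ [(D, JCD (m - 1) (m + (n - 1)))]).
    assert (Hlen : length pf = m + n + 1)
      by (unfold pf; rewrite !length_app, length_map; simpl; lia).
    assert (Hlast : nth (m + n) pf (Var 0, JAx) = (D, JCD (m - 1) (m + (n - 1)))).
    { unfold pf. rewrite !app_nth2 by (rewrite ?length_map; lia).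
      rewrite length_map. fold m n. replace (m + n - m - n) with 0 by lia. reflexivity. }
    exists pf. split; [split; [|split]|].
    + unfold pf. destruct pP; [congruence | discriminate].
    + intros k Hk. rewrite Hlen in Hk.
      destruct (lt_dec k m) as [H1|H1]; [apply valid_line_app_l; auto|].
      destruct (lt_dec (k - m) n) as [H2|H2].
      * replace k with (m + (k - m)) by lia. apply valid_line_shifted; auto.
      * replace k with (m + n) by lia. unfold valid_line. rewrite Hlast.
        split; [lia|]. split; [lia|].
        unfold pf. rewrite app_nth1 by lia.
        unfold m. rewrite nth_shifted by (unfold n in *; lia). fold m.
        destruct (nth (m - 1) pP _) as [fP jP], (nth (n - 1) pQ _) as [fQ []];
          simpl in *; subst; exact Hcd.
    + rewrite last_nth, Hlen. replace (m + n + 1 - 1) with (m + n) by lia.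
      rewrite Hlast. reflexivity.
    + intros D' [i [j Hin]]. unfold pf in Hin. rewrite !in_app_iff, in_map_iff in Hin.
      destruct Hin as [Hin | [[[f [|i' j']] [E Hin]] | [E|[]]]].
      * apply dP. exists i, j. exact Hin.
      * discriminate.
      * simpl in E. injection E as -> _ _. apply dQ. exists i', j'. exact Hin.
      * injection E as -> _ _. exact HG.
Qed.

(** * Computing condensed detachments *)

Definition bind (v : nat) (t : form) : nat -> form :=
  fun w => if Nat.eqb w v then t else Var w.

Fixpoint lookup (bs : list (nat * form)) (v : nat) : form :=
  match bs with
  | [] => Var v
  | (w, t) :: bs => if Nat.eqb v w then t else lookup bs v
  end.

Definition subst_bindings (s : nat -> form) (bs : list (nat * form)) : list (nat * form) :=
  map (fun p => (fst p, subst s (snd p))) bs.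

Definition subst_eqs (s : nat -> form) (eqs : list (form * form)) : list (form * form) :=
  map (fun e => (subst s (fst e), subst s (snd e))) eqs.

(* Robinson's algorithm, accumulating a triangular list of bindings.  Only
   [unify_solves] is proved: [cd_compute] checks the resulting unifier itself,
   and the fuel merely bounds the computation. *)
Fixpoint unify (fuel : nat) (bs : list (nat * form)) (eqs : list (form * form))
  : option (list (nat * form)) :=
  match fuel with
  | 0 => None
  | S fuel =>
    let elim v t eqs :=
      if occurs_dec v t then None else
      unify fuel ((v, t) :: subst_bindings (bind v t) bs) (subst_eqs (bind v t) eqs) in
    match eqs with
    | [] => Some bs
    | (Var v, Var w) :: eqs => if Nat.eqb v w then unify fuel bs eqs else elim v (Var w) eqs
    | (Var v, t) :: eqs | (t, Var v) :: eqs => elim v t eqs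
    | (Imp a1 a2, Imp b1 b2) :: eqs => unify fuel bs ((a1, b1) :: (a2, b2) :: eqs)
    | (Neg a, Neg b) :: eqs => unify fuel bs ((a, b) :: eqs)
    | _ => None
    end
  end.

Definition solves (t : nat -> form) (bs : list (nat * form)) : Prop :=
  forall v u, In (v, u) bs -> t v = subst t u.

Definition unifies (t : nat -> form) (eqs : list (form * form)) : Prop :=
  forall a b, In (a, b) eqs -> subst t a = subst t b.

Lemma subst_bind (t : nat -> form) (v : nat) (u f : form) :
  t v = subst t u -> subst t (subst (bind v u) f) = subst t f.
Proof.
  intros H. rewrite subst_subst. apply subst_ext. intros w _. unfold bind.
  destruct (Nat.eqb_spec w v); subst; auto.
Qed.

Lemma solves_elim (t : nat -> form) (v : nat) (u : form) (bs : list (nat * form)) :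
  t v = subst t u -> solves t bs -> solves t ((v, u) :: subst_bindings (bind v u) bs).
Proof.
  intros Hv Hbs w r [E|Hin]; [injection E as <- <-; exact Hv|].
  apply in_map_iff in Hin as [[w' r'] [E Hin]]. injection E as <- <-. simpl.
  rewrite subst_bind by exact Hv. auto.
Qed.

Lemma unifies_elim (t : nat -> form) (v : nat) (u : form) (eqs : list (form * form)) :
  t v = subst t u -> unifies t eqs -> unifies t (subst_eqs (bind v u) eqs).
Proof.
  intros Hv Heqs a b Hin. apply in_map_iff in Hin as [[a' b'] [E Hin]]. injection E as <- <-.
  simpl. rewrite !subst_bind by exact Hv. auto.
Qed.

Lemma unify_solves (fuel : nat) (bs bs' : list (nat * form)) (eqs : list (form * form))
    (t : nat -> form) :
  unify fuel bs eqs = Some bs' -> solves t bs -> unifies t eqs -> solves t bs'.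
Proof.
  revert bs eqs. induction fuel as [|fuel IH]; intros bs eqs Hu Hbs Heqs; [discriminate|].
  assert (Helim : forall v u eqs', t v = subst t u -> unifies t eqs' ->
            (if occurs_dec v u then None else
             unify fuel ((v, u) :: subst_bindings (bind v u) bs) (subst_eqs (bind v u) eqs'))
            = Some bs' -> solves t bs').
  { intros v u eqs' Hv Heqs' He. destruct (occurs_dec v u); [discriminate|].
    exact (IH _ _ He (solves_elim _ _ _ _ Hv Hbs) (unifies_elim _ _ _ _ Hv Heqs')). }
  assert (Htl : forall e eqs', unifies t (e :: eqs') -> unifies t eqs')
    by (intros e eqs' H a b Hin; apply H; right; exact Hin).
  destruct eqs as [|[a b] eqs]; simpl in Hu; [injection Hu as <-; exact Hbs|].
  assert (Hab : subst t a = subst t b) by (apply Heqs; left; reflexivity).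
  destruct a as [v|a1 a2|a], b as [w|b1 b2|b]; simpl in Hab;
    try discriminate;
    try solve [ refine (Helim _ _ _ _ (Htl _ _ Heqs) Hu); first [exact Hab | exact (eq_sym Hab)] ].
  - revert Hu. destruct (Nat.eqb_spec v w); intros Hu.
    + exact (IH _ _ Hu Hbs (Htl _ _ Heqs)).
    + exact (Helim v (Var w) eqs Hab (Htl _ _ Heqs) Hu).
  - injection Hab as H1 H2. apply (IH _ _ Hu Hbs).
    intros c d [E|[E|Hin]]; [injection E as <- <- .. | apply (Htl _ _ Heqs)]; auto.
  - injection Hab as H1. apply (IH _ _ Hu Hbs).
    intros c d [E|Hin]; [injection E as <- <- | apply (Htl _ _ Heqs)]; auto.
Qed.

Lemma solves_lookup (t : nat -> form) (bs : list (nat * form)) (v : nat) :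
  solves t bs -> t v = subst t (lookup bs v).
Proof.
  induction bs as [|[w u] bs IH]; simpl; intros H; [reflexivity|].
  destruct (Nat.eqb_spec v w) as [->|_]; [apply H; left; reflexivity|].
  apply IH. intros w' u' Hin. apply H. right. exact Hin.
Qed.

Lemma mgu_of_unify (fuel : nat) (A C : form) (bs : list (nat * form)) :
  unify fuel [] [(A, C)] = Some bs ->
  subst (lookup bs) A = subst (lookup bs) C -> mgu (lookup bs) A C.
Proof.
  intros Hu Hunif. split; [exact Hunif|]. intros t Ht. exists t. intros v.
  apply solves_lookup, (unify_solves _ _ _ _ _ Hu).
  - intros w u [].
  - intros a b [E|[]]. injection E as <- <-. exact Ht.
Qed.

Fixpoint position (v : nat) (l : list nat) : nat :=
  match l with
  | [] => 0
  | w :: l => if Nat.eqb v w then 0 else S (position v l)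
  end.

Lemma position_inj (v w : nat) (l : list nat) :
  In v l -> In w l -> position v l = position w l -> v = w.
Proof.
  induction l as [|u l IH]; simpl; [tauto|].
  destruct (Nat.eqb_spec v u), (Nat.eqb_spec w u); intros [Hv|Hv] [Hw|Hw] E;
    try congruence. apply IH; [exact Hv | exact Hw | congruence].
Qed.

(* Numbering the variables in order of first occurrence picks one representative
   in each class of alphabetic variants. *)
Definition canon (f : form) : form := rename (fun v => position v (vars f)) f.

Lemma variant_canon (f : form) : variant f (canon f).
Proof.
  apply variant_rename. intros u w Hu Hw. apply position_inj; apply occurs_vars; assumption.
Qed.

Definition cd_compute (P Q : form) : option form :=
  match P with
  | Imp A B =>
    let Q' := rename (fun v => v + S (maxvar P)) Q in
    match unify 100 [] [(A, Q')] with
    | Some bs =>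
      if form_eq_dec (subst (lookup bs) A) (subst (lookup bs) Q')
      then Some (canon (subst (lookup bs) B)) else None
    | None => None
    end
  | _ => None
  end.

Lemma cd_compute_sound (P Q D : form) : cd_compute P Q = Some D -> cd P Q D.
Proof.
  unfold cd_compute. destruct P as [|A B|]; try discriminate. cbv zeta.
  set (N := S (maxvar (A --> B))).
  destruct (unify 100 [] [(A, rename (fun v => v + N) Q)]) as [bs|] eqn:Hu; [|discriminate].
  destruct form_eq_dec as [Hunif|]; [|discriminate]. intros E. injection E as <-.
  apply (cd_of_shifted_minor _ _ _ _ (lookup bs) N).
  - intros v Hv. apply occurs_maxvar in Hv. unfold N. lia.
  - exact (mgu_of_unify _ _ _ _ Hu Hunif).
  - apply variant_canon.
Qed.

Fixpoint cd_chain (g : form -> bool) (known : list form) (steps : list (nat * nat))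
  : list form :=
  match steps with
  | [] => known
  | (i, j) :: steps =>
    match nth_error known i, nth_error known j with
    | Some P, Some Q =>
      match cd_compute P Q with
      | Some D => if g D then cd_chain g (known ++ [D]) steps else known
      | None => known
      end
    | _, _ => known
    end
  end.

Lemma cd_chain_derives (axs : list form) (g : form -> bool) (known : list form)
    (steps : list (nat * nat)) :
  (forall f, In f known -> derives axs (fun f => g f = true) f) ->
  forall f, In f (cd_chain g known steps) -> derives axs (fun f => g f = true) f.
Proof.
  revert known. induction steps as [|[i j] steps IH]; intros known Hknown; simpl; [exact Hknown|].
  destruct (nth_error known i) as [P|] eqn:EP; [|exact Hknown].
  destruct (nth_error known j) as [Q|] eqn:EQ; [|exact Hknown].
  destruct (cd_compute P Q) as [D|] eqn:ED; [|exact Hknown].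
  destruct (g D) eqn:Hg; [|exact Hknown].
  apply IH. intros f Hf. apply in_app_iff in Hf as [Hf|[<-|[]]]; [auto|].
  apply (derives_cd _ _ P Q); auto using cd_compute_sound;
    apply Hknown; eapply nth_error_In; eassumption.
Qed.

Fixpoint dn_freeb (f : form) : bool :=
  match f with
  | Var _ => true
  | Imp a b => dn_freeb a && dn_freeb b
  | Neg (Neg _) => false
  | Neg a => dn_freeb a
  end.

Definition dn_free (f : form) : Prop := dn_freeb f = true.

Lemma dn_freeb_rename (r : nat -> nat) (f : form) : dn_freeb (rename r f) = dn_freeb f.
Proof. induction f as [|a IHa b IHb|[]]; simpl in *; congruence. Qed.

Definition luk : list form := [L1; L2; L3].

Lemma dn_free_of_derives (f : form) : derives luk dn_free f -> dn_free f.
Proof.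
  intros [a g Ha [r [_ <-]] | P Q D _ _ _ HD]; [|exact HD].
  unfold dn_free. rewrite dn_freeb_rename.
  destruct Ha as [<-|[<-|[<-|[]]]]; reflexivity.
Qed.

(* Formula [3 + k] of [luk_stock] is the conclusion of step [k]. *)
Definition luk_steps : list (nat * nat) :=
  [ (0, 2); (3, 1); (0, 0); (2, 4); (0, 6); (3, 7); (0, 8); (9, 1);
    (0, 10); (0, 1); (11, 12); (0, 13); (5, 14); (3, 0); (0, 16); (17, 3);
    (0, 18); (19, 15); (15, 20); (21, 1); (0, 22); (15, 14); (24, 1); (5, 25);
    (5, 26); (23, 27); (0, 28); (29, 5); (29, 3); (27, 31); (5, 32); (30, 33);
    (5, 29); (30, 30); (36, 30); (36, 37); (35, 38); (30, 39); (35, 37); (30, 41);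
    (30, 0); (33, 30); (43, 44); (42, 45); (40, 46); (34, 47); (41, 44); (39, 49);
    (33, 50); (36, 22); (36, 52); (35, 53); (54, 51); (30, 34); (30, 35); (57, 36);
    (56, 58); (35, 52); (30, 60); (57, 44); (61, 62); (34, 63); (41, 23); (33, 65);
    (61, 66); (34, 67); (30, 26); (30, 2); (57, 70); (69, 71); (41, 72); (69, 73);
    (35, 74); (75, 4); (30, 76); (30, 77); (78, 71); (30, 79); (80, 44); (54, 44);
    (30, 59); (30, 36); (30, 22); (30, 85); (86, 44); (84, 87); (57, 88); (36, 89);
    (35, 90); (91, 44); (30, 70); (93, 44); (42, 94); (40, 95); (34, 96); (57, 94);
    (42, 98); (40, 99); (34, 100); (36, 2); (35, 102); (78, 103); (30, 104); (30, 105);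
    (30, 28); (30, 107); (108, 44); (106, 109); (84, 110); (57, 111); (36, 112); (35, 113);
    (114, 44); (30, 80); (30, 116); (42, 109); (40, 118); (34, 119); (117, 120); (30, 74);
    (30, 122); (123, 45); (42, 124); (40, 125); (34, 126) ].

Definition luk_stock : list form := cd_chain dn_freeb luk luk_steps.

Definition in_stock (f : form) : bool :=
  if in_dec form_eq_dec (canon f) luk_stock then true else false.

Lemma derives_of_stock (f : form) : in_stock f = true -> derives luk dn_free f.
Proof.
  unfold in_stock. destruct in_dec as [Hin|]; [intros _ | discriminate].
  assert (Hcanon : derives luk dn_free (canon f)).
  { apply (cd_chain_derives luk dn_freeb luk luk_steps); [|exact Hin].
    intros a Ha. apply (derives_axiom _ _ a); [exact Ha | apply variant_refl]. }
  apply (derives_variant _ _ (canon f)); [exact Hcanon | apply variant_sym, variant_canon|].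
  apply dn_free_of_derives in Hcanon.
  unfold dn_free, canon in *. rewrite dn_freeb_rename in Hcanon. exact Hcanon.
Qed.

Definition Id (f : form) : form := f --> f.

Ltac from_stock := apply derives_of_stock; vm_compute; reflexivity.

Lemma lk_id : derives luk dn_free (Id x).
Proof. from_stock. Qed.
Lemma lk_id_imp : derives luk dn_free (Id x --> Id y --> Id (x --> y)).
Proof. from_stock. Qed.
Lemma lk_id_id : derives luk dn_free (Id x --> Id x --> Id x).
Proof. from_stock. Qed.
Lemma lk_id_imp_l : derives luk dn_free (Id (x --> y) --> Id x).
Proof. from_stock. Qed.
Lemma lk_id_imp_r : derives luk dn_free (Id (x --> y) --> Id y).
Proof. from_stock. Qed.
Lemma lk_id_neg : derives luk dn_free (Id x --> Id (Neg x)).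
Proof. from_stock. Qed.
Lemma lk_weaken_id2 : derives luk dn_free (x --> Id y --> Id y --> x).
Proof. from_stock. Qed.
Lemma lk_weaken_id : derives luk dn_free (x --> Id y --> y --> x).
Proof. from_stock. Qed.
Lemma lk_frege : derives luk dn_free ((x --> y --> z) --> (x --> y) --> x --> z).
Proof. from_stock. Qed.
Lemma lk_frege_under :
  derives luk dn_free ((x --> y --> z --> Var 3) --> x --> (y --> z) --> y --> Var 3).
Proof. from_stock. Qed.
Lemma lk_contrapose_neg : derives luk dn_free ((x --> Neg y) --> y --> Neg x).
Proof. from_stock. Qed.

(* Schemas guarded by [Id x] and [Id y], which fix how [x] and [y] get
   instantiated when they are detached. *)
Lemma lk_k : derives luk dn_free (Id x --> Id y --> x --> y --> x).
Proof. from_stock. Qed.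
Lemma lk_l3 : derives luk dn_free (Id x --> Id y --> x --> Neg x --> y).
Proof. from_stock. Qed.
Lemma lk_neg_l3 : derives luk dn_free (Id x --> Id y --> Neg x --> x --> y).
Proof. from_stock. Qed.
Lemma lk_neg_imp_neg : derives luk dn_free (Id x --> Id y --> x --> y --> Neg (x --> Neg y)).
Proof. from_stock. Qed.
Lemma lk_neg_imp : derives luk dn_free (Id x --> Id y --> x --> Neg y --> Neg (x --> y)).
Proof. from_stock. Qed.
Lemma lk_cases : derives luk dn_free (Id x --> Id y --> (x --> y) --> (Neg x --> y) --> y).
Proof. from_stock. Qed.

Lemma sub_refl (f : form) : sub f f.
Proof. destruct f; simpl; auto. Qed.

Lemma sub_trans (a b c : form) : sub a b -> sub b c -> sub a c.
Proof.
  intros Hab Hbc. induction c; simpl in Hbc.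
  - destruct Hbc as [->|[]]; auto.
  - destruct Hbc as [->|[H|H]]; auto; simpl; auto.
  - destruct Hbc as [->|H]; auto; simpl; auto.
Qed.

Lemma sub_imp_l (a b c : form) : sub (a --> b) c -> sub a c.
Proof. intros H. apply (sub_trans _ (a --> b)); [simpl; auto using sub_refl | exact H]. Qed.

Lemma sub_imp_r (a b c : form) : sub (a --> b) c -> sub b c.
Proof. intros H. apply (sub_trans _ (a --> b)); [simpl; auto using sub_refl | exact H]. Qed.

Lemma sub_neg (a c : form) : sub (Neg a) c -> sub a c.
Proof. intros H. apply (sub_trans _ (Neg a)); [simpl; auto using sub_refl | exact H]. Qed.

Lemma occurs_sub (v : nat) (a c : form) : sub a c -> occurs v a -> occurs v c.
Proof.
  intros Hac Hv. induction c; simpl in Hac.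
  - destruct Hac as [->|[]]; auto.
  - destruct Hac as [->|[H|H]]; simpl; auto.
  - destruct Hac as [->|H]; simpl; auto.
Qed.

Lemma dn_free_no_dn (f q : form) : dn_free f -> ~ sub (Neg (Neg q)) f.
Proof.
  unfold dn_free. induction f as [v|a IHa b IHb|a IHa]; simpl; intros Hf Hs.
  - destruct Hs as [E|[]]. discriminate.
  - apply andb_true_iff in Hf as [Ha Hb].
    destruct Hs as [E|[Hs|Hs]]; [discriminate | eapply IHa | eapply IHb]; eauto.
  - destruct Hs as [E|Hs].
    + injection E as <-. discriminate.
    + destruct a; try discriminate; eapply IHa; eauto.
Qed.

Definition vars_in (T f : form) : Prop := forall v, occurs v f -> occurs v T.

Definition dns_in (T f : form) : Prop := forall q, sub (Neg (Neg q)) f -> sub (Neg (Neg q)) T.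

Definition fits (T f : form) : Prop := vars_in T f /\ dns_in T f.

Lemma dns_in_sub (T f : form) : sub f T -> dns_in T f.
Proof. intros H q Hq. eapply sub_trans; eauto. Qed.

Lemma dns_in_dn_free (T f : form) : dn_free f -> dns_in T f.
Proof. intros H q Hq. exfalso. eapply dn_free_no_dn; eauto. Qed.

Lemma dns_in_var (T : form) (v : nat) : dns_in T (Var v).
Proof. apply dns_in_dn_free. reflexivity. Qed.

Lemma dns_in_imp (T a b : form) : dns_in T (a --> b) <-> dns_in T a /\ dns_in T b.
Proof.
  split.
  - intros H. split; intros q Hq; apply H; simpl; auto.
  - intros [Ha Hb] q [E|[Hq|Hq]]; [discriminate | auto | auto].
Qed.

Lemma dns_in_neg_inv (T a : form) : dns_in T (Neg a) -> dns_in T a.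
Proof. intros H q Hq. apply H. simpl. auto. Qed.

Lemma dns_in_neg (T a : form) : dns_in T a -> (forall q, a <> Neg q) -> dns_in T (Neg a).
Proof.
  intros H Hn q [E|Hq]; [|auto].
  injection E as E. exfalso. eapply Hn. eauto.
Qed.

Lemma dns_in_partial (T R : form) (th th' : nat -> form) :
  dn_free R ->
  (forall v, occurs v R -> th' v = th v \/ exists w, th' v = Var w) ->
  dns_in T (subst th R) -> dns_in T (subst th' R).
Proof.
  unfold dn_free. induction R as [v|R1 IH1 R2 IH2|R IH]; simpl; intros Hd Hv Hg.
  - destruct (Hv v eq_refl) as [->|[w ->]]; auto using dns_in_var.
  - apply andb_true_iff in Hd as [Hd1 Hd2]. apply dns_in_imp in Hg as [Hg1 Hg2].
    apply dns_in_imp. split; [apply IH1 | apply IH2]; auto.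
  - assert (HdR : dn_freeb R = true) by (destruct R; auto; discriminate).
    intros q [E|Hq].
    + destruct R as [v| |]; try discriminate. injection E as E.
      destruct (Hv v eq_refl) as [E2|[w E2]]; rewrite E2 in E; [|discriminate].
      apply Hg. left. simpl. rewrite E. reflexivity.
    + eapply IH; eauto using dns_in_neg_inv.
Qed.

Lemma vars_in_imp (T a b : form) : vars_in T (a --> b) <-> vars_in T a /\ vars_in T b.
Proof. unfold vars_in. simpl. firstorder. Qed.

Lemma vars_in_neg (T a : form) : vars_in T (Neg a) <-> vars_in T a.
Proof. unfold vars_in. simpl. tauto. Qed.

Lemma fits_sub (T f : form) : sub f T -> fits T f.
Proof. split; [intros v; apply occurs_sub | apply dns_in_sub]; assumption. Qed.

Lemma fits_imp (T a b : form) : fits T (a --> b) <-> fits T a /\ fits T b.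
Proof. unfold fits. rewrite vars_in_imp, dns_in_imp. tauto. Qed.

Lemma fits_neg (T a : form) : fits T a -> (forall q, a <> Neg q) -> fits T (Neg a).
Proof. intros [Hv Hd] Hn. split; [apply vars_in_neg | apply dns_in_neg]; auto. Qed.

Lemma fits_neg_inv (T a : form) : fits T (Neg a) -> fits T a.
Proof. intros [Hv Hd]. split; [apply vars_in_neg | apply dns_in_neg_inv]; auto. Qed.

(** * Theorems anchored at the variables of a formula *)

Definition var_list (T : form) : list nat := nodup Nat.eq_dec (vars T).

Lemma in_var_list (T : form) (v : nat) : In v (var_list T) <-> occurs v T.
Proof. unfold var_list. rewrite nodup_In, occurs_vars. reflexivity. Qed.

(* [Var v1 --> ... --> Var vn]; the junk value for [[]] is never used, as every
   formula has a variable. *)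
Fixpoint tuple (l : list nat) : form :=
  match l with
  | [] => Var 0
  | [v] => Var v
  | v :: l => Var v --> tuple l
  end.

Definition anchor (T : form) : form := Id (tuple (var_list T)).

(* As every variable of [T] occurs in [anchor T], detachment can neither rename
   nor instantiate them: they behave like constants (see [thm_mp_inst]). *)
Definition thm (T X : form) : Prop := derives luk (dns_in T) (anchor T --> X).

Definition inst (l : list form) (v : nat) : form := nth v l (Var v).
Arguments inst l v /.

Lemma vars_nonempty (f : form) : vars f <> [].
Proof.
  induction f; simpl; try discriminate; auto.
  destruct (vars f1); [congruence | discriminate].
Qed.

Lemma var_list_nonempty (T : form) : var_list T <> [].
Proof.
  unfold var_list. pose proof (vars_nonempty T) as H.
  destruct (vars T) as [|v l]; [congruence|]. intros E.
  assert (Hin : In v (nodup Nat.eq_dec (v :: l))) by (apply nodup_In; simpl; auto).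
  rewrite E in Hin. exact Hin.
Qed.

Lemma occurs_tuple (l : list nat) (v : nat) : l <> [] -> occurs v (tuple l) <-> In v l.
Proof.
  induction l as [|a [|b l] IH]; intros Hl; [congruence | simpl; intuition congruence |].
  change (occurs v (Var a --> tuple (b :: l)) <-> In v (a :: b :: l)).
  simpl occurs. rewrite IH by discriminate. simpl. intuition congruence.
Qed.

Lemma occurs_anchor (T : form) (v : nat) : occurs v (anchor T) <-> occurs v T.
Proof.
  unfold anchor, Id. simpl. rewrite occurs_tuple by apply var_list_nonempty.
  rewrite in_var_list. tauto.
Qed.

Lemma dn_free_tuple (l : list nat) : dn_free (Id (tuple l)).
Proof.
  unfold dn_free, Id. simpl. rewrite andb_diag.
  induction l as [|a [|b l] IH]; auto.
Qed.

Lemma dns_in_anchor (T : form) : dns_in T (anchor T).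
Proof. apply dns_in_dn_free, dn_free_tuple. Qed.

Lemma derives_rename_dn_free (L : form) (r : nat -> nat) :
  derives luk dn_free L -> (forall u w, occurs u L -> occurs w L -> r u = r w -> u = w) ->
  derives luk dn_free (rename r L).
Proof.
  intros H Hinj. apply (derives_variant _ _ L); [exact H | apply variant_rename, Hinj|].
  unfold dn_free. rewrite dn_freeb_rename. apply dn_free_of_derives, H.
Qed.

Lemma derives_id_tuple (l : list nat) :
  l <> [] -> NoDup l -> derives luk dn_free (Id (tuple l)).
Proof.
  induction l as [|a [|b l] IH]; intros Hl Hnd; [congruence| |].
  - change (Id (tuple [a])) with (rename (fun _ => a) (Id x)).
    apply derives_rename_dn_free; [exact lk_id|]. intros u w Hu Hw _. simpl in *. lia.
  - inversion Hnd as [|? ? Ha Hnd']. subst.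
    assert (Hstep : derives luk dn_free (Id y --> Id (x --> y))).
    { apply (derives_minor_instance _ _ (Id x) _ _ Var lk_id_imp lk_id);
        [apply subst_var | | reflexivity].
      simpl. intros v Hv Hn. split; [tauto | reflexivity]. }
    apply (derives_rename_dn_free _ (fun v => if v =? 0 then a else S a)) in Hstep.
    2: { intros u w Hu Hw. simpl in Hu, Hw.
         assert (u = 0 \/ u = 1) as [-> | ->] by tauto;
           assert (w = 0 \/ w = 1) as [-> | ->] by tauto; simpl; lia. }
    change (derives luk dn_free (Id (Var (S a)) --> Id (Var a --> Var (S a)))) in Hstep.
    assert (E : subst (bind (S a) (tuple (b :: l))) (Id (Var a --> Var (S a)))
                = Id (tuple (a :: b :: l))).
    { unfold bind. simpl. rewrite Nat.eqb_refl, (proj2 (Nat.eqb_neq a (S a))) by lia.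
      reflexivity. }
    rewrite <- E.
    apply (derives_minor_instance _ _ _ _ _ _ Hstep (IH ltac:(discriminate) Hnd')).
    + unfold bind. simpl. rewrite Nat.eqb_refl. reflexivity.
    + unfold Id. cbn [occurs]. intros v Hv Hn.
      assert (v = a) by intuition congruence. subst v. split.
      * rewrite occurs_tuple by discriminate. tauto.
      * unfold bind. rewrite (proj2 (Nat.eqb_neq a (S a))) by lia. reflexivity.
    + rewrite E. apply dn_free_tuple.
Qed.

Lemma derives_anchor (T : form) : derives luk dn_free (anchor T).
Proof. apply derives_id_tuple; [apply var_list_nonempty | apply NoDup_nodup]. Qed.

Lemma derives_dns_in (T L : form) : derives luk dn_free L -> derives luk (dns_in T) L.
Proof. apply derives_mono. intros f. apply dns_in_dn_free. Qed.

Lemma thm_anchor (T : form) : thm T (anchor T).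
Proof.
  unfold thm.
  change (anchor T --> anchor T) with (subst (bind 0 (tuple (var_list T))) (Id x --> Id x)).
  apply (derives_minor_instance _ _ (Id x) _ (anchor T)).
  - apply derives_dns_in, lk_id_id.
  - apply derives_dns_in, derives_anchor.
  - reflexivity.
  - simpl. tauto.
  - apply dns_in_imp. split; apply dns_in_anchor.
Qed.

Lemma thm_mp_inst (T A B A' : form) (th : nat -> form) :
  thm T (A --> B) -> thm T A' -> subst th A = A' ->
  (forall v, occurs v (anchor T) -> th v = Var v) ->
  (forall v, occurs v B -> ~ occurs v A -> ~ occurs v (anchor T) ->
             ~ occurs v A' /\ th v = Var v) ->
  dns_in T A -> dns_in T B -> dns_in T (subst th B) -> thm T (subst th B).
Proof.
  intros HAB HA' Hinst Hanchor Hfree gA gB gB'.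
  assert (Hdist : derives luk (dns_in T) ((anchor T --> A) --> anchor T --> B)).
  { change ((anchor T --> A) --> anchor T --> B)
      with (subst (inst [anchor T; A; B]) ((x --> y) --> x --> z)).
    apply (derives_minor_instance _ _ (x --> y --> z) _ (anchor T --> A --> B));
      [apply derives_dns_in, lk_frege | exact HAB | reflexivity | simpl; tauto |].
    cbn [subst inst nth]. rewrite !dns_in_imp. auto using dns_in_anchor. }
  assert (Hfix : subst th (anchor T) = anchor T) by (apply subst_id_on; exact Hanchor).
  unfold thm. rewrite <- Hfix at 1. change (derives luk (dns_in T) (subst th (anchor T --> B))).
  apply (derives_minor_instance _ _ (anchor T --> A) _ _ _ Hdist HA').
  - cbn [subst]. rewrite Hfix, Hinst. reflexivity.
  - cbn [occurs]. intros v Hv Hn. destruct (Hfree v) as [H1 H2]; [tauto .. |].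
    split; [tauto | exact H2].
  - cbn [subst]. rewrite Hfix. apply dns_in_imp. auto using dns_in_anchor.
Qed.

Lemma thm_mp (T A B : form) :
  thm T (A --> B) -> thm T A -> dns_in T A -> dns_in T B -> thm T B.
Proof.
  intros HAB HA gA gB. rewrite <- (subst_var B).
  apply (thm_mp_inst T A B A Var); rewrite ?subst_var; auto.
Qed.

Definition fresh (T : form) : nat := S (maxvar T).

Definition shift (T f : form) : form := rename (fun v => v + fresh T) f.

Definition unshift (T : form) (th : nat -> form) : nat -> form :=
  fun v => if fresh T <=? v then th (v - fresh T) else Var v.

Lemma occurs_shift (T f : form) (v : nat) :
  occurs v (shift T f) <-> fresh T <= v /\ occurs (v - fresh T) f.
Proof.
  unfold shift. rewrite occurs_rename. split.
  - intros [w [Hw ->]]. split; [lia|]. replace (w + fresh T - fresh T) with w by lia. exact Hw.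
  - intros [H1 H2]. exists (v - fresh T). split; [exact H2 | lia].
Qed.

Lemma vars_in_lt_fresh (T f : form) (v : nat) : vars_in T f -> occurs v f -> v < fresh T.
Proof. intros H Hv. apply H, occurs_maxvar in Hv. unfold fresh. lia. Qed.

Lemma anchor_lt_fresh (T : form) (v : nat) : occurs v (anchor T) -> v < fresh T.
Proof.
  intros Hv. apply (vars_in_lt_fresh T (anchor T)); [intros w; apply occurs_anchor | exact Hv].
Qed.

Lemma unshift_low (T : form) (th : nat -> form) (v : nat) : v < fresh T -> unshift T th v = Var v.
Proof. intros H. unfold unshift. destruct (Nat.leb_spec (fresh T) v); [lia | reflexivity]. Qed.

Lemma unshift_high (T : form) (th : nat -> form) (v : nat) :
  fresh T <= v -> unshift T th v = th (v - fresh T).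
Proof. intros H. unfold unshift. destruct (Nat.leb_spec (fresh T) v); [reflexivity | lia]. Qed.

Lemma subst_unshift (T : form) (th : nat -> form) (f : form) :
  subst (unshift T th) (shift T f) = subst th f.
Proof.
  unfold shift. rewrite rename_subst, subst_subst. apply subst_ext. intros v _. simpl.
  rewrite unshift_high by lia. f_equal. lia.
Qed.

Lemma dns_in_shift (T F : form) : dn_free F -> dns_in T (shift T F).
Proof. intros H. apply dns_in_dn_free. unfold dn_free, shift. rewrite dn_freeb_rename. exact H. Qed.

Lemma thm_of_fresh (T Z : form) :
  derives luk dn_free Z -> (forall v, occurs v Z -> fresh T <= v) -> thm T Z.
Proof.
  intros HZ HZv.
  set (M := S (maxvar Z)).
  assert (HM : forall v, occurs v Z -> v <> M)
    by (intros v Hv; apply occurs_maxvar in Hv; unfold M; lia).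
  assert (HM0 : M <> 0) by (unfold M; lia). clearbody M.
  assert (gZ : dns_in T Z) by (apply dns_in_dn_free, dn_free_of_derives, HZ).
  assert (Hweak : derives luk dn_free (x --> Id (Var M) --> Id (Var M) --> x)).
  { change (x --> Id (Var M) --> Id (Var M) --> x)
      with (rename (fun w => if w =? 1 then M else w) (x --> Id y --> Id y --> x)).
    apply derives_rename_dn_free; [exact lk_weaken_id2|].
    intros u w Hu Hw. simpl in Hu, Hw.
    assert (u = 0 \/ u = 1) as [-> | ->] by tauto;
      assert (w = 0 \/ w = 1) as [-> | ->] by tauto; simpl; lia. }
  assert (HZM : derives luk (dns_in T) (Id (Var M) --> Id (Var M) --> Z)).
  { replace (Id (Var M) --> Id (Var M) --> Z)
      with (subst (bind 0 Z) (Id (Var M) --> Id (Var M) --> x))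
      by (unfold bind; simpl; rewrite (proj2 (Nat.eqb_neq M 0)) by lia; reflexivity).
    apply (derives_minor_instance _ _ x _ Z).
    - apply derives_dns_in, Hweak.
    - apply derives_dns_in, HZ.
    - reflexivity.
    - simpl. intros v Hv Hn. assert (v = M) as -> by tauto. split.
      + intros Ho. exact (HM M Ho eq_refl).
      + unfold bind. rewrite (proj2 (Nat.eqb_neq M 0)) by lia. reflexivity.
    - unfold bind. simpl. rewrite (proj2 (Nat.eqb_neq M 0)) by lia.
      rewrite !dns_in_imp. auto using dns_in_var. }
  unfold thm.
  assert (E : subst (bind M (tuple (var_list T))) (Id (Var M) --> Z) = anchor T --> Z).
  { simpl. unfold bind at 1 2. rewrite Nat.eqb_refl. f_equal.
    apply subst_id_on. intros v Hv. unfold bind. rewrite (proj2 (Nat.eqb_neq v M)); auto. }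
  rewrite <- E.
  apply (derives_minor_instance _ _ _ _ _ _ HZM (derives_dns_in _ _ (derives_anchor T))).
  - simpl. unfold bind. rewrite Nat.eqb_refl. reflexivity.
  - intros v Hv Hn. assert (HvZ : occurs v Z) by (simpl in Hv, Hn; tauto). split.
    + intros Ho. apply anchor_lt_fresh in Ho. apply HZv in HvZ. lia.
    + unfold bind. rewrite (proj2 (Nat.eqb_neq v M)); auto.
  - rewrite E. apply dns_in_imp. split; [apply dns_in_anchor | exact gZ].
Qed.

Lemma thm_shift (T L : form) : derives luk dn_free L -> thm T (shift T L).
Proof.
  intros HL. apply thm_of_fresh.
  - apply derives_rename_dn_free; [exact HL | intros; lia].
  - intros v Hv. apply occurs_shift in Hv. tauto.
Qed.

Lemma thm_app1 (T X R : form) (th : nat -> form) :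
  derives luk dn_free (X --> R) -> (forall v, occurs v R -> occurs v X) ->
  thm T (subst th X) -> dns_in T (subst th R) -> thm T (subst th R).
Proof.
  intros HL Hcov HX gR.
  pose proof (dn_free_of_derives _ HL) as Hdn. unfold dn_free in Hdn. simpl in Hdn.
  apply andb_true_iff in Hdn as [HdX HdR].
  rewrite <- (subst_unshift T th R).
  apply (thm_mp_inst T (shift T X) (shift T R) _ _ (thm_shift T _ HL) HX).
  - apply subst_unshift.
  - intros v Hv. apply unshift_low, anchor_lt_fresh, Hv.
  - intros v Hv Hn. exfalso. apply Hn, occurs_shift. apply occurs_shift in Hv. intuition.
  - apply dns_in_shift, HdX.
  - apply dns_in_shift, HdR.
  - rewrite subst_unshift. exact gR.
Qed.

Definition unshift_on (T : form) (th : nat -> form) (X : form) : nat -> form :=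
  fun v => if occurs_dec v (shift T X) then unshift T th v else Var v.

Lemma subst_unshift_on (T X f : form) (th : nat -> form) :
  (forall v, occurs v X -> vars_in T (th v)) ->
  subst (unshift T th) (subst (unshift_on T th X) f) = subst (unshift T th) f.
Proof.
  intros Hlow. rewrite subst_subst. apply subst_ext. intros v _. unfold unshift_on.
  destruct (occurs_dec v (shift T X)) as [Hv|]; [|reflexivity].
  apply occurs_shift in Hv as [Hv1 Hv2]. rewrite unshift_high by exact Hv1.
  apply subst_id_on. intros w Hw.
  apply unshift_low, (vars_in_lt_fresh T (th (v - fresh T))); auto.
Qed.

Lemma dns_in_unshift_on (T X F : form) (th : nat -> form) :
  dn_free F -> dns_in T (subst th F) -> dns_in T (subst (unshift_on T th X) (shift T F)).
Proof.
  intros HF gF. apply (dns_in_partial _ _ (unshift T th)).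
  - unfold dn_free, shift. rewrite dn_freeb_rename. exact HF.
  - intros v _. unfold unshift_on. destruct occurs_dec; eauto.
  - rewrite subst_unshift. exact gF.
Qed.

Lemma thm_app_first (T X Y : form) (th : nat -> form) :
  derives luk dn_free (X --> Y) -> (forall v, occurs v X -> vars_in T (th v)) ->
  thm T (subst th X) -> dns_in T (subst th Y) ->
  thm T (subst (unshift_on T th X) (shift T Y)).
Proof.
  intros HL Hlow HX gY.
  pose proof (dn_free_of_derives _ HL) as Hdn. unfold dn_free in Hdn. simpl in Hdn.
  apply andb_true_iff in Hdn as [HdX HdY].
  apply (thm_mp_inst T (shift T X) (shift T Y) _ _ (thm_shift T _ HL) HX).
  - rewrite <- (subst_unshift T th X). apply subst_ext. intros v Hv. unfold unshift_on.
    destruct occurs_dec; tauto.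
  - intros v Hv. unfold unshift_on. destruct occurs_dec; [|reflexivity].
    apply unshift_low, anchor_lt_fresh, Hv.
  - intros v Hv HnX _. split.
    + intros Ho. apply occurs_subst in Ho as [w [Hw Ho]].
      apply (vars_in_lt_fresh T (th w) v (Hlow w Hw)) in Ho.
      apply occurs_shift in Hv. lia.
    + unfold unshift_on. destruct occurs_dec; tauto.
  - apply dns_in_shift, HdX.
  - apply dns_in_shift, HdY.
  - apply dns_in_unshift_on; assumption.
Qed.

Lemma thm_app2 (T X1 X2 R : form) (th : nat -> form) :
  derives luk dn_free (X1 --> X2 --> R) ->
  (forall v, occurs v R -> occurs v X1 \/ occurs v X2) ->
  (forall v, occurs v X1 -> vars_in T (th v)) ->
  thm T (subst th X1) -> thm T (subst th X2) ->
  dns_in T (subst th X2) -> dns_in T (subst th R) -> thm T (subst th R).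
Proof.
  intros HL Hcov Hlow H1 H2 g2 gR.
  pose proof (dn_free_of_derives _ HL) as Hdn. unfold dn_free in Hdn. simpl in Hdn.
  apply andb_true_iff in Hdn as [_ Hdn]. apply andb_true_iff in Hdn as [Hd2 HdR].
  pose proof (thm_app_first T X1 (X2 --> R) th HL Hlow H1 ltac:(apply dns_in_imp; auto)) as H12.
  set (th1 := unshift_on T th X1) in H12.
  assert (Hback : forall F, subst (unshift T th) (subst th1 (shift T F)) = subst th F)
    by (intros F; unfold th1; rewrite subst_unshift_on by exact Hlow; apply subst_unshift).
  rewrite <- Hback.
  apply (thm_mp_inst T (subst th1 (shift T X2)) (subst th1 (shift T R)) _ _ H12 H2).
  - apply Hback.
  - intros v Hv. apply unshift_low, anchor_lt_fresh, Hv.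
  - intros v Hv HnX2 Hna. exfalso.
    apply occurs_subst in Hv as [w [Hw Hv]]. apply occurs_shift in Hw as [Hw1 Hw2].
    unfold th1, unshift_on in Hv. destruct occurs_dec as [HwX1|HwX1].
    + apply Hna, occurs_anchor. rewrite unshift_high in Hv by exact Hw1.
      apply occurs_shift in HwX1. exact (Hlow _ (proj2 HwX1) _ Hv).
    + simpl in Hv. subst w. destruct (Hcov _ Hw2) as [Hc|Hc].
      * apply HwX1, occurs_shift. auto.
      * apply HnX2, occurs_subst. exists v. split; [apply occurs_shift; auto|].
        unfold th1, unshift_on. destruct occurs_dec; [contradiction | simpl; reflexivity].
  - apply dns_in_unshift_on; assumption.
  - apply dns_in_unshift_on; assumption.
  - rewrite Hback. exact gR.
Qed.

Lemma thm_id_tuple_in (T : form) (l : list nat) :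
  l <> [] -> thm T (Id (tuple l)) -> forall v, In v l -> thm T (Id (Var v)).
Proof.
  induction l as [|a [|b l] IH]; intros Hne Hth v Hv;
    [congruence | destruct Hv as [<-|[]]; exact Hth |].
  assert (Hpair : thm T (subst (inst [Var a; tuple (b :: l)]) (Id (x --> y)))) by exact Hth.
  assert (Hdn : dn_free (Id (tuple (b :: l)))) by apply dn_free_tuple.
  destruct Hv as [<-|Hv].
  - change (Id (Var a)) with (subst (inst [Var a; tuple (b :: l)]) (Id x)).
    apply (thm_app1 _ _ _ _ lk_id_imp_l);
      [simpl; tauto | exact Hpair | apply dns_in_dn_free; reflexivity].
  - apply IH; [discriminate | | exact Hv].
    change (Id (tuple (b :: l))) with (subst (inst [Var a; tuple (b :: l)]) (Id y)).
    apply (thm_app1 _ _ _ _ lk_id_imp_r); [simpl; tauto | exact Hpair | apply dns_in_dn_free, Hdn].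
Qed.

Lemma thm_id (T F : form) : fits T F -> thm T (Id F).
Proof.
  induction F as [v|F1 IH1 F2 IH2|F IH]; intros HF.
  - apply (thm_id_tuple_in T (var_list T)); [apply var_list_nonempty | apply thm_anchor |].
    apply in_var_list, (proj1 HF). simpl. reflexivity.
  - apply fits_imp in HF as [HF1 HF2].
    change (Id (F1 --> F2)) with (subst (inst [F1; F2]) (Id (x --> y))).
    apply (thm_app2 _ (Id x) (Id y) _ _ lk_id_imp).
    + simpl. tauto.
    + simpl. intros v [-> | ->]; apply HF1.
    + apply IH1, HF1.
    + apply IH2, HF2.
    + simpl. apply dns_in_imp. split; apply HF2.
    + simpl. rewrite !dns_in_imp. destruct HF1, HF2. tauto.
  - change (Id (Neg F)) with (subst (inst [F]) (Id (Neg x))).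
    apply (thm_app1 _ _ _ _ lk_id_neg); [simpl; tauto | apply IH, fits_neg_inv, HF |].
    simpl. apply dns_in_imp. split; apply HF.
Qed.

Lemma thm_guarded (T R F G : form) :
  derives luk dn_free (Id x --> Id y --> R) -> (forall v, occurs v R -> v = 0 \/ v = 1) ->
  fits T F -> fits T G -> dns_in T (subst (inst [F; G]) R) -> thm T (subst (inst [F; G]) R).
Proof.
  intros HL HR HF HG gR. apply (thm_app2 _ (Id x) (Id y) _ _ HL).
  - intros v Hv. destruct (HR v Hv) as [-> | ->]; simpl; auto.
  - simpl. intros v [-> | ->]; apply HF.
  - apply thm_id, HF.
  - apply thm_id, HG.
  - simpl. apply dns_in_imp. split; apply HG.
  - exact gR.
Qed.

Lemma thm_weaken (T Y h : form) : thm T Y -> fits T Y -> fits T h -> thm T (h --> Y).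
Proof.
  intros HY fY fh. change (h --> Y) with (subst (inst [Y; h]) (y --> x)).
  apply (thm_app2 _ x (Id y) _ _ lk_weaken_id).
  - simpl. tauto.
  - simpl. intros v ->. apply fY.
  - exact HY.
  - apply thm_id, fh.
  - simpl. apply dns_in_imp. split; apply fh.
  - simpl. apply dns_in_imp. split; [apply fh | apply fY].
Qed.

Lemma thm_frege (T h a b : form) :
  thm T (h --> a --> b) -> dns_in T h -> dns_in T a -> dns_in T b ->
  thm T ((h --> a) --> h --> b).
Proof.
  intros H gh ga gb.
  change ((h --> a) --> h --> b) with (subst (inst [h; a; b]) ((x --> y) --> x --> z)).
  apply (thm_app1 _ _ _ _ lk_frege); [simpl; tauto | exact H |].
  simpl. rewrite !dns_in_imp. auto.
Qed.

Lemma thm_frege_axiom (T h a b : form) :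
  fits T h -> fits T a -> fits T b -> thm T ((h --> a --> b) --> (h --> a) --> h --> b).
Proof.
  intros fh fa fb. set (Z := h --> a --> b).
  change (Z --> (h --> a) --> h --> b)
    with (subst (inst [Z; h; a; b]) (x --> (y --> z) --> y --> Var 3)).
  apply (thm_app1 _ _ _ _ lk_frege_under); [simpl; tauto | |].
  - apply thm_id. unfold Z. rewrite !fits_imp. auto.
  - destruct fh, fa, fb. simpl. unfold Z. rewrite !dns_in_imp. tauto.
Qed.

Lemma thm_trans (T a b c : form) :
  thm T (a --> b) -> thm T (b --> c) -> fits T a -> fits T b -> fits T c -> thm T (a --> c).
Proof.
  intros Hab Hbc fa fb fc. change (a --> c) with (subst (inst [a; b; c]) (x --> z)).
  apply (thm_app2 _ (x --> y) (y --> z)).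
  - apply (derives_axiom _ _ L1); [simpl; auto | apply variant_refl].
  - simpl. tauto.
  - simpl. intros v [-> | ->]; [apply fa | apply fb].
  - exact Hab.
  - exact Hbc.
  - simpl. apply dns_in_imp. split; [apply fb | apply fc].
  - simpl. apply dns_in_imp. split; [apply fa | apply fc].
Qed.

Lemma thm_k (T a b : form) : fits T a -> fits T b -> thm T (a --> b --> a).
Proof.
  intros fa fb. change (a --> b --> a) with (subst (inst [a; b]) (x --> y --> x)).
  apply (thm_guarded _ _ _ _ lk_k); auto.
  - simpl. intros v [<-|[<-|<-]]; auto.
  - simpl. rewrite !dns_in_imp. destruct fa, fb. tauto.
Qed.

Definition hyps (G : list form) (X : form) : form := fold_right Imp X G.

Definition all_fit (T : form) (G : list form) : Prop := forall h, In h G -> fits T h.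

Lemma all_fit_cons (T h : form) (G : list form) : all_fit T (h :: G) <-> fits T h /\ all_fit T G.
Proof.
  unfold all_fit. simpl. split; [intros H; split; auto | intros [Hh HG] h' [<-|Hin]; auto].
Qed.

Lemma fits_hyps (T X : form) (G : list form) : all_fit T G -> fits T X -> fits T (hyps G X).
Proof.
  induction G as [|h G IH]; simpl; [auto|]. intros [Hh HG]%all_fit_cons HX.
  apply fits_imp. auto.
Qed.

Lemma thm_hyps_weaken (T X : form) (G : list form) :
  all_fit T G -> thm T X -> fits T X -> thm T (hyps G X).
Proof.
  induction G as [|h G IH]; simpl; [auto|]. intros [Hh HG]%all_fit_cons H fX.
  apply thm_weaken; auto using fits_hyps.
Qed.

Lemma thm_hyps_mp_axiom (T A B : form) (G : list form) :
  all_fit T G -> fits T A -> fits T B ->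
  thm T (hyps G (A --> B) --> hyps G A --> hyps G B).
Proof.
  intros HG fA fB. induction G as [|h G IH]; simpl.
  - apply (thm_id T (A --> B)), fits_imp. auto.
  - apply all_fit_cons in HG as [fh HG]. specialize (IH HG).
    assert (f1 : fits T (hyps G (A --> B))) by (apply fits_hyps; [|apply fits_imp]; auto).
    assert (f2 : fits T (hyps G A)) by (apply fits_hyps; auto).
    assert (f3 : fits T (hyps G B)) by (apply fits_hyps; auto).
    apply (thm_trans _ _ (h --> hyps G A --> hyps G B)).
    + apply thm_frege; [| apply fh | apply f1 | apply fits_imp; auto].
      apply thm_weaken; [exact IH | rewrite !fits_imp; auto | exact fh].
    + apply thm_frege_axiom; assumption.
    + rewrite fits_imp. auto.
    + rewrite !fits_imp. auto.
    + rewrite !fits_imp. auto.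
Qed.

Lemma thm_hyps_mp (T A B : form) (G : list form) :
  all_fit T G -> fits T A -> fits T B ->
  thm T (hyps G (A --> B)) -> thm T (hyps G A) -> thm T (hyps G B).
Proof.
  intros HG fA fB HAB HA.
  assert (fAB : fits T (A --> B)) by (apply fits_imp; auto).
  apply (thm_mp _ (hyps G A)); [| exact HA | apply fits_hyps | apply fits_hyps]; auto.
  apply (thm_mp _ (hyps G (A --> B))); [| exact HAB | apply fits_hyps | ]; auto.
  - apply thm_hyps_mp_axiom; auto.
  - apply fits_imp. auto using fits_hyps.
Qed.

Lemma thm_hyps_mp1 (T X Y : form) (G : list form) :
  all_fit T G -> fits T X -> fits T Y ->
  thm T (X --> Y) -> thm T (hyps G X) -> thm T (hyps G Y).
Proof.
  intros HG fX fY HXY HX. apply (thm_hyps_mp _ X); auto.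
  apply thm_hyps_weaken; [exact HG | exact HXY | apply fits_imp; auto].
Qed.

Lemma thm_hyps_mp2 (T X Y Z : form) (G : list form) :
  all_fit T G -> fits T X -> fits T Y -> fits T Z ->
  thm T (X --> Y --> Z) -> thm T (hyps G X) -> thm T (hyps G Y) -> thm T (hyps G Z).
Proof.
  intros HG fX fY fZ HXYZ HX HY. apply (thm_hyps_mp _ Y); auto.
  apply (thm_hyps_mp1 _ X); auto. apply fits_imp. auto.
Qed.

Lemma thm_hyps_in (T l : form) (G : list form) : all_fit T G -> In l G -> thm T (hyps G l).
Proof.
  intros HG Hin. assert (fl : fits T l) by (apply HG, Hin).
  induction G as [|h G IH]; [destruct Hin|]. simpl.
  apply all_fit_cons in HG as [fh HG].
  destruct (form_eq_dec h l) as [<-|Hne].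
  - clear IH Hin. induction G as [|g G IHG]; simpl; [apply thm_id, fh|].
    apply all_fit_cons in HG as [fg HG].
    apply (thm_trans _ _ (hyps G h)); auto using thm_k, fits_hyps.
    apply fits_imp. auto using fits_hyps.
  - destruct Hin as [E|Hin]; [congruence|].
    apply thm_weaken; auto using fits_hyps.
Qed.

(** * Kalmár's lemma *)

Fixpoint eval (r : nat -> bool) (f : form) : bool :=
  match f with
  | Var v => r v
  | Imp a b => implb (eval r a) (eval r b)
  | Neg a => negb (eval r a)
  end.

(* Negating [Neg D] gives [D], not [Neg (Neg D)]: this is why no double
   negation outside [T] ever enters a proof. *)
Definition negate (C : form) : form := match C with Neg D => D | _ => Neg C end.

Definition literal (r : nat -> bool) (C : form) : form := if eval r C then C else negate C.

Definition literals (r : nat -> bool) (l : list nat) : list form :=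
  map (fun v => literal r (Var v)) l.

Lemma fits_negate (T C : form) : fits T C -> fits T (negate C).
Proof.
  destruct C as [v|a b|a]; simpl; intros H; [apply fits_neg; [exact H | discriminate] ..|].
  apply fits_neg_inv, H.
Qed.

Lemma fits_literal (T C : form) (r : nat -> bool) : sub C T -> fits T (literal r C).
Proof. intros H. unfold literal. destruct eval; auto using fits_negate, fits_sub. Qed.

Lemma all_fit_literals (T : form) (r : nat -> bool) (l : list nat) :
  (forall v, In v l -> occurs v T) -> all_fit T (literals r l).
Proof.
  intros Hl h Hh. apply in_map_iff in Hh as [v [<- Hv]]. apply fits_literal.
  specialize (Hl v Hv). clear -Hl. induction T; simpl in *; intuition.
Qed.

Lemma negate_cases (C : form) :
  (exists G, C = Neg G /\ negate C = G) \/ (negate C = Neg C /\ forall G, C <> Neg G).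
Proof. destruct C; simpl; [right | right | left]; eauto; split; congruence. Qed.

Lemma thm_negate_imp (T D E : form) :
  fits T D -> fits T E -> thm T (D --> negate E --> Neg (D --> E)).
Proof.
  intros fD fE. assert (fC : fits T (Neg (D --> E)))
    by (apply fits_neg; [apply fits_imp; auto | discriminate]).
  destruct (negate_cases E) as [[G [-> ->]] | [-> HE]].
  - change (D --> G --> Neg (D --> Neg G))
      with (subst (inst [D; G]) (x --> y --> Neg (x --> Neg y))).
    apply (thm_guarded _ _ _ _ lk_neg_imp_neg); auto using fits_neg_inv.
    + simpl. intuition.
    + simpl. rewrite !dns_in_imp. split; [apply fD|]. split; [apply fits_neg_inv, fE | apply fC].
  - change (D --> Neg E --> Neg (D --> E))
      with (subst (inst [D; E]) (x --> Neg y --> Neg (x --> y))).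
    apply (thm_guarded _ _ _ _ lk_neg_imp); auto.
    + simpl. intuition.
    + simpl. rewrite !dns_in_imp. split; [apply fD|]. split; [|apply fC].
      apply fits_neg; assumption.
Qed.

Lemma thm_negate_elim (T D E : form) :
  fits T D -> fits T E -> thm T (negate D --> D --> E).
Proof.
  intros fD fE. destruct (negate_cases D) as [[G [-> ->]] | [-> HD]].
  - change (G --> Neg G --> E) with (subst (inst [G; E]) (x --> Neg x --> y)).
    apply (thm_guarded _ _ _ _ lk_l3); auto using fits_neg_inv.
    + simpl. intuition.
    + simpl. rewrite !dns_in_imp. split; [apply fits_neg_inv, fD|]. split; [apply fD | apply fE].
  - change (Neg D --> D --> E) with (subst (inst [D; E]) (Neg x --> x --> y)).
    apply (thm_guarded _ _ _ _ lk_neg_l3); auto.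
    + simpl. intuition.
    + simpl. rewrite !dns_in_imp.
      split; [apply fits_neg; assumption|]. split; [apply fD | apply fE].
Qed.

Lemma thm_dn_intro (T E : form) : fits T (Neg (Neg E)) -> thm T (E --> Neg (Neg E)).
Proof.
  intros fC. assert (fE : fits T E) by apply (fits_neg_inv _ _ (fits_neg_inv _ _ fC)).
  change (E --> Neg (Neg E)) with (subst (inst [Neg E; E]) (y --> Neg x)).
  apply (thm_app1 _ _ _ _ lk_contrapose_neg); [simpl; tauto | |].
  - apply (thm_id T (Neg E)), fits_neg_inv, fC.
  - simpl. apply dns_in_imp. split; [apply fE | apply fC].
Qed.

Lemma kalmar (T C : form) (r : nat -> bool) :
  sub C T -> thm T (hyps (literals r (var_list T)) (literal r C)).
Proof.
  pose proof (all_fit_literals T r (var_list T) (fun v => proj1 (in_var_list T v))) as HG.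
  induction C as [v|D IHD E IHE|D IHD]; intros HC.
  - apply thm_hyps_in; [exact HG|]. apply (in_map (fun v => literal r (Var v))).
    apply in_var_list, (occurs_sub _ _ _ HC). simpl. reflexivity.
  - pose proof (sub_imp_l _ _ _ HC) as sD. pose proof (sub_imp_r _ _ _ HC) as sE.
    specialize (IHD sD). specialize (IHE sE).
    assert (fD := fits_sub _ _ sD). assert (fE := fits_sub _ _ sE).
    assert (fC := fits_sub _ _ HC).
    unfold literal in *. simpl. destruct (eval r E), (eval r D); simpl.
    + apply (thm_hyps_mp1 _ E); auto using thm_k.
    + apply (thm_hyps_mp1 _ E); auto using thm_k.
    + apply (thm_hyps_mp2 _ D (negate E)); auto using fits_negate, thm_negate_imp.
      apply (fits_negate _ (D --> E)), fC.
    + apply (thm_hyps_mp1 _ (negate D)); auto using fits_negate, thm_negate_elim.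
  - pose proof (sub_neg _ _ HC) as sD. specialize (IHD sD).
    unfold literal in *. simpl. destruct (eval r D) eqn:ED; simpl; [exact IHD|].
    destruct (negate_cases D) as [[E [-> HnD]] | [HnD _]]; rewrite HnD in IHD; [|exact IHD].
    apply (thm_hyps_mp1 _ E); auto using thm_dn_intro, fits_sub.
    apply fits_neg_inv, fits_neg_inv, fits_sub, HC.
Qed.

Definition taut (f : form) : Prop := forall r, eval r f = true.

Lemma hyps_app (l1 l2 : list form) (X : form) : hyps (l1 ++ l2) X = hyps l1 (hyps l2 X).
Proof. apply fold_right_app. Qed.

Lemma thm_excluded_middle_elim (T F : form) (G : list form) (v : nat) :
  all_fit T G -> occurs v T -> fits T F ->
  thm T (hyps G (Var v --> F)) -> thm T (hyps G (Neg (Var v) --> F)) -> thm T (hyps G F).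
Proof.
  intros HG Hv fF Hpos Hneg.
  assert (fv : fits T (Var v)) by (split; [intros w <-; exact Hv | apply dns_in_var]).
  assert (fnv : fits T (Neg (Var v))) by (apply fits_neg; [exact fv | discriminate]).
  apply (thm_hyps_mp2 _ (Var v --> F) (Neg (Var v) --> F)); auto; try (apply fits_imp; auto).
  change ((Var v --> F) --> (Neg (Var v) --> F) --> F)
    with (subst (inst [Var v; F]) ((x --> y) --> (Neg x --> y) --> y)).
  apply (thm_guarded _ _ _ _ lk_cases); auto.
  - simpl. intuition.
  - simpl. rewrite !dns_in_imp. destruct fv, fnv, fF. tauto.
Qed.

Lemma thm_of_taut (T : form) : taut T -> thm T T.
Proof.
  intros HT. assert (fT : fits T T) by apply fits_sub, sub_refl.
  enough (Hdrop : forall l2 l1 r, l1 ++ l2 = var_list T -> thm T (hyps (literals r l1) T))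
    by exact (Hdrop (var_list T) [] (fun _ => true) eq_refl).
  induction l2 as [|v l2 IH]; intros l1 r E.
  - rewrite app_nil_r in E. subst l1. pose proof (kalmar T T r (sub_refl T)) as K.
    unfold literal in K. rewrite HT in K. exact K.
  - assert (Hin : forall w, In w (l1 ++ v :: l2) -> occurs w T)
      by (intros w Hw; apply in_var_list; rewrite <- E; exact Hw).
    assert (Hv : ~ In v l1).
    { intros Hv. pose proof (NoDup_nodup Nat.eq_dec (vars T)) as Hnd. fold (var_list T) in Hnd.
      rewrite <- E in Hnd. apply NoDup_remove_2 in Hnd. apply Hnd, in_or_app. auto. }
    assert (Hcase : forall b, thm T (hyps (literals r l1)
                      (literal (fun w => if w =? v then b else r w) (Var v) --> T))).
    { intros b. specialize (IH (l1 ++ [v]) (fun w => if w =? v then b else r w)).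
      rewrite <- app_assoc in IH. specialize (IH E).
      unfold literals in IH. rewrite map_app, hyps_app in IH. simpl in IH.
      replace (map _ l1) with (literals r l1) in IH; [exact IH|].
      apply map_ext_in. intros w Hw. unfold literal. simpl.
      destruct (Nat.eqb_spec w v); [subst; contradiction | reflexivity]. }
    apply (thm_excluded_middle_elim _ _ _ v); [| apply Hin, in_or_app; simpl; auto | exact fT | ..].
    + apply all_fit_literals. intros w Hw. apply Hin, in_or_app. auto.
    + specialize (Hcase true). unfold literal in Hcase. simpl in Hcase.
      rewrite Nat.eqb_refl in Hcase. exact Hcase.
    + specialize (Hcase false). unfold literal in Hcase. simpl in Hcase.
      rewrite Nat.eqb_refl in Hcase. exact Hcase.
Qed.

Lemma derives_of_taut (T : form) : taut T -> derives luk (dns_in T) T.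
Proof.
  intros HT. apply (derives_major_instance _ _ (anchor T) T (Id x) (bind 0 (tuple (var_list T)))).
  - apply thm_of_taut, HT.
  - apply derives_dns_in, lk_id.
  - reflexivity.
  - apply dns_in_sub, sub_refl.
Qed.

(** * Soundness *)

Lemma eval_subst (r : nat -> bool) (s : nat -> form) (F : form) :
  eval r (subst s F) = eval (fun v => eval r (s v)) F.
Proof. induction F; simpl; congruence. Qed.

Lemma taut_subst (s : nat -> form) (F : form) : taut F -> taut (subst s F).
Proof. intros H r. rewrite eval_subst. apply H. Qed.

Lemma taut_variant (a b : form) : taut a -> variant a b -> taut b.
Proof. intros H [r [_ <-]]. rewrite rename_subst. apply taut_subst, H. Qed.

Lemma taut_cd (P Q D : form) : taut P -> taut Q -> cd P Q D -> taut D.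
Proof.
  intros HP HQ [A [B [Q' [s [HAB [HQ' [_ [[Hunif _] HD]]]]]]]].
  apply (taut_variant (subst s B)); [|exact HD]. intros r.
  pose proof (taut_subst s _ (taut_variant _ _ HP HAB) r) as H. simpl in H.
  unfold unifier in Hunif. rewrite Hunif, (taut_subst s _ (taut_variant _ _ HQ HQ') r) in H.
  exact H.
Qed.

Lemma taut_of_proof (axs : list form) (pf : list line) (B : form) :
  (forall a, In a axs -> taut a) -> is_proof axs pf B -> taut B.
Proof.
  intros Haxs [Hne [Hv Hl]].
  assert (H : forall k, k < length pf -> taut (fst (nth k pf (Var 0, JAx)))).
  { intros k. induction k as [k IH] using (well_founded_induction lt_wf). intros Hk.
    specialize (Hv k Hk). unfold valid_line in Hv.
    destruct (nth k pf (Var 0, JAx)) as [f [|i j]]; simpl.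
    - destruct Hv as [a [Ha Hva]]. exact (taut_variant a f (Haxs a Ha) Hva).
    - destruct Hv as [Hi [Hj Hc]].
      exact (taut_cd _ _ _ (IH i Hi ltac:(lia)) (IH j Hj ltac:(lia)) Hc). }
  rewrite <- Hl, last_nth. apply H. destruct pf; [congruence | simpl; lia].
Qed.

Lemma taut_luk (a : form) : In a luk -> taut a.
Proof.
  intros Ha r. destruct Ha as [<-|[<-|[<-|[]]]]; simpl;
    destruct (r 0), (r 1), (r 2); reflexivity.
Qed.

Lemma eval_star_pair (S : list form) (r : nat -> bool) (f : form) :
  eval r (star S f) = eval r f /\ eval r (star S (Neg f)) = negb (eval r f).
Proof.
  induction f as [v|a [IHa _] b [IHb _]|a [IH1 IH2]];
    [simpl; auto | simpl; rewrite IHa, IHb; auto |].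
  split; [exact IH2|].
  change (star S (Neg (Neg a)))
    with (if in_dec form_eq_dec (Neg (Neg a)) S then star S a else Neg (star S (Neg a))).
  destruct in_dec; cbn [eval]; rewrite ?IH1, ?IH2; destruct (eval r a); reflexivity.
Qed.

Lemma eval_star (S : list form) (r : nat -> bool) (f : form) : eval r (star S f) = eval r f.
Proof. apply eval_star_pair. Qed.

Theorem theorem5 : strong_dn_elim [L1; L2; L3].
Proof.
  (* The selection need not consist of subformulas of [B]: [star] preserves truth
     values for every [S]. *)
  intros B S [pf Hpf] _.
  assert (HB : taut B) by exact (taut_of_proof _ _ _ taut_luk Hpf).
  assert (HT : taut (star S B)) by (intros r; rewrite eval_star; apply HB).
  destruct (proof_of_derives _ _ _ (derives_of_taut _ HT)) as [pf' [Hproof Hdeduced]].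
  exists pf'. split; [exact Hproof|].
  intros D HD q Hq. exists (Neg (Neg q)). split; [exact (Hdeduced D HD q Hq) | apply variant_refl].
Qed.
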